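(* Let $\mathbb{E},\mathbb{F}$ be finite-dimensional real inner-product spaces, $K\subseteq\mathbb{E}$ a pointed closed convex cone with nonempty interior, $\mathcal{A}\colon\mathbb{E}\to\mathbb{F}^*$ linear, $c\in\mathbb{E}^*$, $b\in\mathbb{F}^*$. Set $\mathcal{C}_P:=\{x\in K : \mathcal{A}(x)=b\}$ and $\mathcal{C}_D:=\{s\in K^* : s\in\operatorname{Im}(\mathcal{A}^* )-c\}$. Suppose $\mathcal{C}_P\cap\operatorname{int}(K)\neq\emptyset$ and let $\bar x\in\mathcal{C}_P$. Then there exists $\bar s\in\mathcal{C}_D$ such that $(\bar x,\bar s)$ is strictly complementary if and only if $c\in\operatorname{relint}(N_{\mathcal{C}_P}(\bar x))$.
   Context: $K^*:=\{s\in\mathbb{E}^*:\langle s,x\rangle\ge0\ \forall x\in K\}$. A pair $(\bar x,\bar s)\in\mathcal{C}_P\times\mathcal{C}_D$ is strictly complementary if there is a face $F$ of $K$ with $\bar x\in\operatorname{relint}(F)$ and $\bar s\in\operatorname{relint}(F^{\triangle})$, where $F^{\triangle}:=K^*\cap F^\perp$ is the conjugate face. The normal cone of a convex set $\mathcal{C}$ at $\bar x\in\mathcal{C}$ is $N_{\mathcal{C}}(\bar x):=\{c\in\mathbb{E}^* : \langle c,x\rangle\le\langle c,\bar x\rangle\ \forall x\in\mathcal{C}\}$; $\operatorname{relint}$ is the relative interior. *)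

From HB Require Import structures.
From mathcomp Require Import all_boot all_order all_algebra.
From mathcomp Require Import reals.
Set Implicit Arguments. Unset Strict Implicit. Unset Printing Implicit Defensive.
Import Order.TTheory GRing.Theory Num.Theory.
Local Open Scope ring_scope.

(* E = 'rV[R]_n and F = 'rV[R]_m with the standard inner product; the dual
   spaces E^*, F^* are again row vectors, paired by [pair]. *)

Section Defs.
Variable R : realType.

Definition pair (n : nat) (s x : 'rV[R]_n) : R := (s *m x^T) 0 0.

Definition in_ball (n : nat) (x : 'rV[R]_n) (e : R) (y : 'rV[R]_n) : Prop :=
  pair (y - x) (y - x) < e ^+ 2.

Definition interior (n : nat) (C : 'rV[R]_n -> Prop) (x : 'rV[R]_n) : Prop :=
  exists2 e : R, 0 < e & forall y, in_ball x e y -> C y.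

Definition closed_set (n : nat) (C : 'rV[R]_n -> Prop) : Prop :=
  forall x, ~ C x -> exists2 e : R, 0 < e & forall y, in_ball x e y -> ~ C y.

Definition convex_set (n : nat) (C : 'rV[R]_n -> Prop) : Prop :=
  forall x y (t : R), C x -> C y -> 0 <= t -> t <= 1 -> C (t *: x + (1 - t) *: y).

Definition is_cone (n : nat) (C : 'rV[R]_n -> Prop) : Prop :=
  C 0 /\ forall x (t : R), C x -> 0 <= t -> C (t *: x).

Definition pointed (n : nat) (C : 'rV[R]_n -> Prop) : Prop :=
  forall x, C x -> C (- x) -> x = 0.

Definition aff_hull (n : nat) (C : 'rV[R]_n -> Prop) (y : 'rV[R]_n) : Prop :=
  exists (k : nat) (l : 'I_k -> R) (p : 'I_k -> 'rV[R]_n),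
    [/\ forall i, C (p i), \sum_(i < k) l i = 1 & y = \sum_(i < k) l i *: p i].

Definition relint (n : nat) (C : 'rV[R]_n -> Prop) (x : 'rV[R]_n) : Prop :=
  C x /\ exists2 e : R, 0 < e &
    forall y, aff_hull C y -> in_ball x e y -> C y.

Definition dual_cone (n : nat) (K : 'rV[R]_n -> Prop) (s : 'rV[R]_n) : Prop :=
  forall x, K x -> 0 <= pair s x.

Definition face (n : nat) (K F : 'rV[R]_n -> Prop) : Prop :=
  [/\ forall x, F x -> K x, convex_set F &
      forall x y (t : R), K x -> K y -> 0 < t -> t < 1 ->
        F (t *: x + (1 - t) *: y) -> F x /\ F y].

Definition conj_face (n : nat) (K F : 'rV[R]_n -> Prop) (s : 'rV[R]_n) : Prop :=
  dual_cone K s /\ forall x, F x -> pair s x = 0.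

Definition strictly_complementary (n : nat) (K : 'rV[R]_n -> Prop)
    (x s : 'rV[R]_n) : Prop :=
  exists F : 'rV[R]_n -> Prop, [/\ face K F, relint F x & relint (conj_face K F) s].

Definition normal_cone (n : nat) (C : 'rV[R]_n -> Prop) (xb c : 'rV[R]_n) : Prop :=
  forall x, C x -> pair c x <= pair c xb.

(* A : E -> F^* is x |-> x *m A; its adjoint A^* : F -> E^* is y |-> y *m A^T. *)
Definition primal_feas (n m : nat) (K : 'rV[R]_n -> Prop) (A : 'M[R]_(n, m))
    (b : 'rV[R]_m) (x : 'rV[R]_n) : Prop :=
  K x /\ x *m A = b.

Definition dual_feas (n m : nat) (K : 'rV[R]_n -> Prop) (A : 'M[R]_(n, m))
    (c : 'rV[R]_n) (s : 'rV[R]_n) : Prop :=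
  dual_cone K s /\ exists y : 'rV[R]_m, s = y *m A^T - c.

End Defs.

From HB Require Import structures.
From mathcomp Require Import all_boot all_order all_algebra.
From mathcomp Require Import reals classical_sets.
From mathcomp Require Import ring lra zify.
From Stdlib Require Import Classical.
Import Order.TTheory GRing.Theory Num.Theory.
Local Open Scope ring_scope.

(* Under Slater's condition the normal cone of the feasible set at [xb] is
   [Im A^T - (K^* ∩ xb^⊥)]: a normal vector is nonpositive on the cone spanned by
   [K - xb] intersected with [ker A], and a Hahn-Banach extension of it that is
   nonpositive on the whole cone yields the dual slack.  A point of a convex set
   is in its relative interior iff every segment ending at it can be prolonged
   beyond it.  If [sb] is strictly complementary for a face [F], then
   [K^* ∩ xb^⊥ = F^Δ], and prolonging segments beyond [sb] in [F^Δ] prolongs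
   the corresponding segments beyond [c] in the normal cone.  Conversely, with
   [F] the minimal face of [xb] and [s0] in the relative interior of [F^Δ], the
   vector [c] is a proper convex combination of [-s0] and a point of the normal
   cone beyond [c]; the same combination of dual slacks lies in relint [F^Δ]. *)

Set Implicit Arguments. Unset Strict Implicit. Unset Printing Implicit Defensive.

Section Pairing.
Variables (R : realType) (n : nat).
Implicit Types (s x : 'rV[R]_n).

Lemma pairE s x : pair s x = \sum_i s 0 i * x 0 i.
Proof. by rewrite /pair !mxE; apply: eq_bigr => i _; rewrite mxE. Qed.

Lemma pairDl s1 s2 x : pair (s1 + s2) x = pair s1 x + pair s2 x.
Proof. by rewrite !pairE -big_split; apply: eq_bigr => i _; rewrite mxE mulrDl. Qed.

Lemma pairDr s x1 x2 : pair s (x1 + x2) = pair s x1 + pair s x2.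
Proof. by rewrite !pairE -big_split; apply: eq_bigr => i _; rewrite mxE mulrDr. Qed.

Lemma pairZl a s x : pair (a *: s) x = a * pair s x.
Proof. by rewrite !pairE mulr_sumr; apply: eq_bigr => i _; rewrite mxE mulrA. Qed.

Lemma pairZr a s x : pair s (a *: x) = a * pair s x.
Proof. by rewrite !pairE mulr_sumr; apply: eq_bigr => i _; rewrite mxE mulrCA. Qed.

Lemma pairNl s x : pair (- s) x = - pair s x.
Proof. by rewrite -scaleN1r pairZl mulN1r. Qed.

Lemma pairNr s x : pair s (- x) = - pair s x.
Proof. by rewrite -scaleN1r pairZr mulN1r. Qed.

Lemma pairBl s1 s2 x : pair (s1 - s2) x = pair s1 x - pair s2 x.
Proof. by rewrite pairDl pairNl. Qed.

Lemma pairBr s x1 x2 : pair s (x1 - x2) = pair s x1 - pair s x2.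
Proof. by rewrite pairDr pairNr. Qed.

Lemma pair0l x : pair 0 x = 0.
Proof. by rewrite pairE big1 // => i _; rewrite mxE mul0r. Qed.

Lemma pair0r s : pair s 0 = 0.
Proof. by rewrite pairE big1 // => i _; rewrite mxE mulr0. Qed.

Lemma pair_ge0 x : 0 <= pair x x.
Proof. by rewrite pairE sumr_ge0 // => i _; rewrite -expr2 sqr_ge0. Qed.

Lemma pair_eq0 x : (pair x x == 0) = (x == 0).
Proof.
apply/idP/eqP => [|->]; last by rewrite pair0l.
rewrite pairE psumr_eq0 => [/allP x0|i _]; last by rewrite -expr2 sqr_ge0.
apply/rowP => i; rewrite mxE.
by have := x0 i (mem_index_enum _); rewrite -expr2 expf_eq0 /= => /eqP.
Qed.

Lemma sqr_coord_le_pair x i : x 0 i ^+ 2 <= pair x x.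
Proof.
rewrite pairE (bigD1 i) //= -expr2 lerDl.
by apply: sumr_ge0 => j _; rewrite -expr2 sqr_ge0.
Qed.

Lemma pair_mul_tr m (y : 'rV[R]_m) (A : 'M[R]_(n, m)) x :
  pair (y *m A^T) x = pair y (x *m A).
Proof. by rewrite /pair trmx_mul mulmxA. Qed.

Lemma exists_small_multiple (v : 'rV[R]_n) (e : R) : 0 < e ->
  exists2 t : R, 0 < t /\ t <= 1 & pair (t *: v) (t *: v) < e ^+ 2.
Proof.
move=> e0; set q := pair v v; have q0 : 0 <= q := pair_ge0 v.
have d0 : 0 < q + e + 1 by lra.
exists (e / (q + e + 1)); first split.
- exact: divr_gt0.
- by rewrite ler_pdivrMr // mul1r; lra.
rewrite pairZl pairZr -/q mulrA -expr2 expr_div_n.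
rewrite mulrAC ltr_pdivrMr ?exprn_gt0 // ltr_pM2l ?exprn_gt0 //.
by rewrite expr2; nra.
Qed.

Lemma abs_coord_lt_ball (w : 'rV[R]_n) (e : R) i :
  0 < e -> pair w w < e ^+ 2 -> `|w 0 i| < e.
Proof.
move=> e0 hw; rewrite -(@ltr_pXn2r _ 2) ?nnegrE ?normr_ge0 ?ltW //.
by rewrite real_normK ?num_real //; apply: le_lt_trans (sqr_coord_le_pair w i) hw.
Qed.

End Pairing.

Lemma split_lshift m k (i : 'I_m) : split (lshift k i) = inl i.
Proof. exact: (unsplitK (inl _ i)). Qed.

Lemma split_rshift m k (i : 'I_k) : split (rshift m i) = inr i.
Proof. exact: (unsplitK (inr _ i)). Qed.

Section ConvexSets.
Variables (R : realType) (n : nat).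
Implicit Types (C : 'rV[R]_n -> Prop) (x y z v : 'rV[R]_n).

Lemma convex_mid C x y : convex_set C -> C x -> C y -> C (2^-1 *: (x + y)).
Proof.
move=> cC Cx Cy; have := cC _ _ 2^-1 Cx Cy.
have -> : (1 - 2^-1 : R) = 2^-1 by field.
by rewrite scalerDr; apply; rewrite ?invr_ge0 ?ler0n ?invf_le1 ?ler1n.
Qed.

Lemma convex_cone_addr C : is_cone C -> convex_set C ->
  forall x y, C x -> C y -> C (x + y).
Proof.
move=> [_ CZ] cC x y Cx Cy; have := CZ _ 2 (convex_mid cC Cx Cy) (ler0n _ 2).
by rewrite scalerA mulfV ?pnatr_eq0 // scale1r.
Qed.

Lemma convex_shrink C x v (e t : R) : convex_set C -> C x -> C (x + e *: v) ->
  0 < e -> 0 <= t -> t <= e -> C (x + t *: v).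
Proof.
move=> cC Cx Cxv e0 t0 te; have := cC _ _ (t / e) Cxv Cx.
have -> : t / e *: (x + e *: v) + (1 - t / e) *: x = x + t *: v.
  by apply/rowP => i; rewrite !mxE; field; rewrite gt_eqF.
by apply; [rewrite divr_ge0 // ltW | rewrite ler_pdivrMr // mul1r].
Qed.

Lemma convex_sym_segment C x v (t : R) : convex_set C ->
  C (x + v) -> C (x - v) -> `|t| <= 1 -> C (x + t *: v).
Proof.
move=> cC Cp Cm ht; have Cx : C x.
  have := convex_mid cC Cp Cm.
  by rewrite addrACA subrr addr0 -mulr2n -scaler_nat scalerA mulVf ?pnatr_eq0 // scale1r.
case: (lerP 0 t) => t0.
- apply: (convex_shrink (e := 1) cC Cx) => //; first by rewrite scale1r.
  by rewrite -(ger0_norm t0).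
- rewrite -[t]opprK scaleNr -scalerN.
  apply: (convex_shrink (e := 1) cC Cx) => //; first by rewrite scale1r.
  + by rewrite oppr_ge0 ltW.
  + by rewrite -(ltr0_norm t0).
Qed.

Lemma convex_avg C k (p : 'I_k -> 'rV[R]_n) : convex_set C -> (0 < k)%N ->
  (forall j, C (p j)) -> C (k%:R^-1 *: \sum_(j < k) p j).
Proof.
move=> cC; elim: k p => // -[_ p _ Cp|k IH p _ Cp].
  by rewrite big_ord1 invr1 scale1r.
rewrite big_ord_recr /=; set S := \sum_(i < k.+1) _.
have CS : C (k.+1%:R^-1 *: S) by apply: IH.
have := cC _ _ (k.+1%:R / k.+2%:R) CS (Cp ord_max).
have -> : k.+1%:R / k.+2%:R *: (k.+1%:R^-1 *: S) + (1 - k.+1%:R / k.+2%:R) *: p ord_max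
   = k.+2%:R^-1 *: (S + p ord_max).
  apply/rowP => i; rewrite !mxE; field.
  by have k0 := ler0n R k; apply/andP; split; rewrite gt_eqF //; lra.
by apply; rewrite ?divr_ge0 ?ler0n // ler_pdivrMr ?ltr0n // mul1r ler_nat.
Qed.

Lemma aff_hull_self C x : C x -> aff_hull C x.
Proof.
move=> Cx; exists 1%N, (fun _ => 1), (fun _ => x).
by split => //; rewrite big_ord1 ?scale1r.
Qed.

Lemma aff_hull_comb C y z (t : R) : aff_hull C y -> C z ->
  aff_hull C (t *: y + (1 - t) *: z).
Proof.
move=> [k [l [p [Cp sl ->]]]] Cz.
exists (k + 1)%N, (fun i => if split i is inl j then t * l j else 1 - t),
  (fun i => if split i is inl j then p j else z); split.
- by move=> i; case: (split i).
- rewrite big_split_ord /= big_ord1 split_rshift.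
  under eq_bigr do rewrite split_lshift.
  by rewrite -mulr_sumr sl mulr1 addrC subrK.
- rewrite big_split_ord /= big_ord1 split_rshift.
  under [X in _ = X + _]eq_bigr do rewrite split_lshift.
  by rewrite scaler_sumr; congr (_ + _); apply: eq_bigr => i _; rewrite scalerA.
Qed.

Lemma aff_hull_sub_span C x y k (G : 'M[R]_(k, n)) :
  (forall z, C z -> (z - x <= G)%MS) -> aff_hull C y -> (y - x <= G)%MS.
Proof.
move=> CG [m [l [p [Cp sl ->]]]].
have -> : \sum_(i < m) l i *: p i - x = \sum_(i < m) l i *: (p i - x).
  rewrite -[X in _ - X = _]scale1r -sl scaler_suml -sumrB.
  by apply: eq_bigr => i _; rewrite scalerBr.
by apply: summx_sub => i _; apply/scalemx_sub/CG.
Qed.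

Lemma exists_spanning_rows (D : 'rV[R]_n -> Prop) :
  exists k (G : 'M[R]_(k, n)), (forall j, D (row j G)) /\ forall x, D x -> (x <= G)%MS.
Proof.
suff /(_ n 0%N 0) : forall d k (G : 'M[R]_(k, n)), (n - \rank G <= d)%N ->
    (forall j, D (row j G)) ->
    exists k (G : 'M[R]_(k, n)), (forall j, D (row j G)) /\ forall x, D x -> (x <= G)%MS.
  by apply; [exact: leq_subr | case].
elim=> [|d IH] k G rkG DG.
  exists k, G; split => // x _; apply: submx_full.
  by rewrite /row_full eqn_leq rank_leq_col /= -subn_eq0 -leqn0.
have [spanG|] := classic (forall x, D x -> (x <= G)%MS); first by exists k, G.
move=> /not_all_ex_not [x /(@imply_to_and (D x)) [Dx /negP xG]].
have ltG : (G < col_mx G x)%MS.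
  rewrite ltmxE -addsmxE addsmxSl /=; apply: contra xG => /(submx_trans _); apply.
  by rewrite -addsmxE addsmxSr.
apply: (IH _ (col_mx G x)).
  by have := rank_ltmx ltG; have := rank_leq_col (col_mx G x); lia.
move=> j; rewrite -(splitK j); case: (split j) => j' /=; first by rewrite rowKu.
by rewrite rowKd row_id.
Qed.

End ConvexSets.

Section RelativeInterior.
Variables (R : realType) (n : nat).
Implicit Types (C : 'rV[R]_n -> Prop) (x y z w : 'rV[R]_n).

Lemma abs_mulmx_coord_le k (P : 'M[R]_(n, k)) w (e : R) j :
  0 < e -> pair w w < e ^+ 2 -> `|(w *m P) 0 j| <= e * \sum_i `|P i j|.
Proof.
move=> e0 we; rewrite mxE mulr_sumr; apply: le_trans (ler_norm_sum _ _ _) _.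
apply: ler_sum => i _; rewrite normrM ler_wpM2r //.
exact/ltW/abs_coord_lt_ball.
Qed.

Lemma relint_of_span C x k (G : 'M[R]_(k, n)) : convex_set C -> C x ->
  (forall j, C (x + row j G) /\ C (x - row j G)) ->
  (forall y, C y -> (y - x <= G)%MS) -> relint C x.
Proof.
move=> cC Cx CG spanG; split => //.
case: k G CG spanG => [|k] G CG spanG.
  exists 1 => // y /(aff_hull_sub_span spanG) + _.
  by rewrite (flatmx0 G) => /submx0null /eqP; rewrite subr_eq0 => /eqP ->.
set beta := \sum_(j < k.+1) \sum_i `|pinvmx G i j|.
have beta0 : 0 <= beta by do 2!apply: sumr_ge0 => ? _.
have d0 : 0 < k.+1%:R * beta + 1 by have := mulr_ge0 (ler0n R k.+1) beta0; lra.
set e := (k.+1%:R * beta + 1)^-1; have e0 : 0 < e by rewrite invr_gt0.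
exists e => // y /(aff_hull_sub_span spanG) yxG yx.
set al := (y - x) *m pinvmx G.
have al_le j : `|k.+1%:R * al 0 j| <= 1.
  rewrite normrM ger0_norm ?ler0n //.
  have : `|al 0 j| <= e * beta.
    apply: le_trans (abs_mulmx_coord_le _ _ e0 yx) _; apply: ler_wpM2l; first exact: ltW.
    by rewrite /beta (bigD1 j) //= lerDl; apply: sumr_ge0 => ? _; apply: sumr_ge0.
  rewrite -(ler_pM2l (ltr0Sn R k)) => /le_trans; apply.
  by rewrite mulrCA ler_pdivrMl // mulr1; lra.
have -> : y = k.+1%:R^-1 *: \sum_(j < k.+1) (x + (k.+1%:R * al 0 j) *: row j G).
  rewrite big_split /= sumr_const card_ord scalerDr -scaler_nat scalerA.
  rewrite mulVf ?pnatr_eq0 // scale1r scaler_sumr.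
  under eq_bigr do rewrite scalerA mulrA mulVf ?pnatr_eq0 // mul1r.
  by rewrite -mulmx_sum_row mulmxKpV // addrC subrK.
apply: convex_avg => // j; have [Cp Cm] := CG j.
exact: convex_sym_segment.
Qed.

Lemma relint_extend C x y : relint C x -> C y ->
  exists2 e : R, 0 < e & C (x + e *: (x - y)).
Proof.
move=> [Cx [r r0 ballC]] Cy; have [e [e0 _] ex] := exists_small_multiple (x - y) r0.
exists e => //; apply: ballC.
  have := aff_hull_comb (1 + e) (aff_hull_self Cx) Cy.
  by congr aff_hull; apply/rowP => i; rewrite !mxE; ring.
by rewrite /in_ball addrC addKr.
Qed.

(* together with [relint_extend], Rockafellar's characterisation of the relative
   interior (Convex Analysis, Thm 6.4) *)
Lemma relint_of_extend C x : convex_set C -> C x ->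
  (forall y, C y -> exists2 e : R, 0 < e & C (x + e *: (x - y))) -> relint C x.
Proof.
move=> cC Cx ext.
have [k [G [CG spanG]]] := exists_spanning_rows (fun v => C (x + v) /\ C (x - v)).
apply: (relint_of_span cC Cx CG) => y Cy.
have [e e0 Cext] := ext y Cy; set t := e / (1 + e).
have t0 : 0 < t by rewrite divr_gt0 //; lra.
have t1 : t <= 1 by rewrite ler_pdivrMr ?mul1r; lra.
have te : t <= e by rewrite ler_pdivrMr ?mulrDr ?mulr1; nra.
suff /spanG : C (x + t *: (y - x)) /\ C (x - t *: (y - x)).
  by move/(scalemx_sub t^-1); rewrite scalerA mulVf ?gt_eqF // scale1r.
split.
- have := cC _ _ t Cy Cx (ltW t0) t1.
  have -> // : t *: y + (1 - t) *: x = x + t *: (y - x).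
  by apply/rowP => i; rewrite !mxE; ring.
- by rewrite -scalerN opprB; apply: (convex_shrink cC Cx Cext) => //; exact: ltW.
Qed.

Lemma relint_convex_comb C x y (l : R) : convex_set C -> relint C x -> C y ->
  0 < l -> l <= 1 -> relint C (l *: x + (1 - l) *: y).
Proof.
move=> cC rx Cy l0 l1; have Cx := rx.1.
apply: relint_of_extend => [//||z Cz]; first by apply: cC => //; exact: ltW.
have [d d0 Cxz] := relint_extend rx Cz.
have q0 : 0 < 1 + d - d * l by nra.
(* go beyond [x] towards [x + d (x - z)], keeping the same weight on [y] *)
exists (d * l / (1 + d - d * l)); first by rewrite divr_gt0 // mulr_gt0.
have := cC _ _ (l / (1 + d - d * l)) Cxz Cy.
have -> : l / (1 + d - d * l) *: (x + d *: (x - z)) + (1 - l / (1 + d - d * l)) *: y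
    = l *: x + (1 - l) *: y
      + d * l / (1 + d - d * l) *: (l *: x + (1 - l) *: y - z).
  by apply/rowP => i; rewrite !mxE; field; rewrite gt_eqF.
by apply; [rewrite divr_ge0 ?ltW | rewrite ler_pdivrMr // mul1r; nra].
Qed.

Lemma exists_relint_cone C : C 0 -> (forall x y, C x -> C y -> C (x + y)) ->
  (forall x (t : R), C x -> 0 <= t -> C (t *: x)) -> exists x, relint C x.
Proof.
move=> C0 CD CZ.
have CS k (G : 'M[R]_(k, n)) (P : pred 'I_k) :
    (forall j, C (row j G)) -> C (\sum_(j | P j) row j G).
  by move=> CG; elim/big_ind: _.
have cC : convex_set C.
  by move=> x y t Cx Cy t0 t1; apply: CD; apply: CZ => //; lra.
have [k [G [CG spanG]]] := exists_spanning_rows C.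
exists (\sum_j row j G); apply: (relint_of_span cC (CS _ _ _ CG)).
  move=> j; split; first by apply: CD => //; exact: CS.
  by rewrite (bigD1 j) //= addrAC subrr add0r; exact: CS.
move=> y /spanG yG; rewrite addmx_sub // eqmx_opp.
by apply: summx_sub => j _; exact: row_sub.
Qed.

End RelativeInterior.

Section ConeFunctionalExtension.
Variables (R : realType) (n : nat) (T : 'rV[R]_n -> Prop).
Hypothesis TD : forall x y, T x -> T y -> T (x + y).
Hypothesis TZ : forall x (t : R), T x -> 0 <= t -> T (t *: x).
Implicit Types (M : 'M[R]_n) (g p w x z : 'rV[R]_n).

Lemma exists_annihilator M z : ~~ (z <= M)%MS ->
  exists w, (forall x, (x <= M)%MS -> pair w x = 0) /\ pair w z = 1.
Proof.
rewrite submxE => zQ; set w0 := z *m cokermx M *m (cokermx M)^T.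
have w0M x : (x <= M)%MS -> pair w0 x = 0.
  by rewrite submxE pair_mul_tr => /eqP ->; rewrite pair0r.
have w0z : 0 < pair w0 z by rewrite pair_mul_tr lt_def pair_eq0 zQ pair_ge0.
exists ((pair w0 z)^-1 *: w0); split => [x xM|].
  by rewrite pairZl (w0M x) // mulr0.
by rewrite pairZl mulVf // gt_eqF.
Qed.

Lemma exists_separating_value M g z :
  (forall x, T x -> (x <= M)%MS -> pair g x <= 0) ->
  (exists2 p, (p <= M)%MS & T (z + p)) -> (exists2 p, (p <= M)%MS & T (p - z)) ->
  exists a : R, (forall p, (p <= M)%MS -> T (p - z) -> pair g p <= a) /\
                (forall p, (p <= M)%MS -> T (z + p) -> a <= - pair g p).
Proof.
move=> gM [p1 p1M Tp1] [p2 p2M Tp2].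
have sum_le q p : (q <= M)%MS -> (p <= M)%MS -> T (q - z) -> T (z + p) ->
    pair g q <= - pair g p.
  move=> qM pM Tq Tp; have Tqp : T (q + p) by have := TD Tq Tp; rewrite addrA subrK.
  by have := gM _ Tqp (addmx_sub qM pM); rewrite pairDr; lra.
pose U : set R := fun u => exists2 p, (p <= M)%MS & T (p - z) /\ u = pair g p.
have supU : has_sup U.
  split; first by exists (pair g p2), p2.
  by exists (- pair g p1) => u [q qM [Tq ->]]; exact: sum_le.
exists (sup U); split => [p pM Tp | p pM Tp].
  by apply: sup_upper_bound => //; exists p.
by apply: ge_sup; [case: supU | move=> u [q qM [Tq ->]]; exact: sum_le].
Qed.

Lemma cone_functional_extend_step M g z :
  (forall x, T x -> (x <= M)%MS -> pair g x <= 0) ->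
  (exists2 p, (p <= M)%MS & T (z + p)) -> (exists2 p, (p <= M)%MS & T (p - z)) ->
  exists g', (forall x, T x -> (x <= M + z)%MS -> pair g' x <= 0) /\
             (forall x, (x <= M)%MS -> pair g' x = pair g x).
Proof.
move=> gM Tz Tmz; have [zM|zM] := boolP (z <= M)%MS.
  by exists g; split => // x Tx; rewrite (addsmx_idPl zM); exact: gM.
have [w [wM wz]] := exists_annihilator zM.
have [a [a_up a_lo]] := exists_separating_value gM Tz Tmz.
exists (g + (a - pair g z) *: w); split => [x Tx /sub_addsmxP [u xE]|x xM]; last first.
  by rewrite pairDl pairZl wM // mulr0 addr0.
move: xE; set p := u.1 *m M; set t := u.2 0 0.
rewrite (mx11_scalar u.2) mul_scalar_mx -/t => xE.
have pM : (p <= M)%MS by exact: submxMl.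
have -> : pair (g + (a - pair g z) *: w) x = pair g p + t * a.
  by rewrite xE pairDl pairZl !pairDr !pairZr wM // wz; ring.
case: (ltgtP t 0) => t0.
- have : T ((- t)^-1 *: p - z).
    have -> : (- t)^-1 *: p - z = (- t)^-1 *: x.
      by rewrite xE; apply/rowP => i; rewrite !mxE; field; lra.
    by apply: TZ => //; rewrite invr_ge0; lra.
  move/(a_up _ (scalemx_sub _ pM)); rewrite pairZr ler_pdivrMl; lra.
- have : T (z + t^-1 *: p).
    have -> : z + t^-1 *: p = t^-1 *: x.
      by rewrite xE; apply/rowP => i; rewrite !mxE; field; lra.
    by apply: TZ => //; rewrite invr_ge0; lra.
  move/(a_lo _ (scalemx_sub _ pM)); rewrite pairZr lerNr => /(ler_wpM2l (ltW t0)).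
  by rewrite mulrA mulfV ?gt_eqF // mul1r; lra.
- move: xE; rewrite t0 scale0r addr0 mul0r addr0 => xE.
  by apply: gM pM; rewrite -xE.
Qed.

Lemma cone_functional_extension M g :
  (forall z, exists2 p, (p <= M)%MS & T (z + p)) ->
  (forall x, T x -> (x <= M)%MS -> pair g x <= 0) ->
  exists g', (forall x, T x -> pair g' x <= 0) /\
             (forall x, (x <= M)%MS -> pair g' x = pair g x).
Proof.
move: {2}(n - \rank M)%N (leqnn (n - \rank M)) => d.
elim: d M g => [|d IH] M g rkM TM gM.
  exists g; split => // x Tx; apply: gM => //; apply: submx_full.
  by rewrite /row_full eqn_leq rank_leq_col /= -subn_eq0 -leqn0.
have [fullM|] := boolP (row_full M).
  by exists g; split => // x Tx; apply: gM => //; exact: submx_full.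
rewrite -sub1mx => /row_subPn [i zM]; set z := row i 1%:M in zM.
have [g1 [g1T g1M]] : exists g1,
    (forall x, T x -> (x <= M + z)%MS -> pair g1 x <= 0) /\
    (forall x, (x <= M)%MS -> pair g1 x = pair g x).
  apply: cone_functional_extend_step => //.
  by have [p pM Tp] := TM (- z); exists p; rewrite // addrC.
have ltM : (M < M + z)%MS.
  by rewrite ltmxE addsmxSl /=; apply: contra zM; apply: submx_trans; exact: addsmxSr.
have [||g' [g'T g'M]] := IH (M + z)%MS g1 _ _ g1T.
- by have := rank_ltmx ltM; have := rank_leq_col (M + z)%MS; lia.
- by move=> y; have [p pM Tp] := TM y; exists p => //; apply: submx_trans pM _; exact: addsmxSl.
exists g'; split => // x xM; rewrite g'M ?g1M //.
by apply: submx_trans xM _; exact: addsmxSl.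
Qed.

End ConeFunctionalExtension.

Lemma orth_kermx_sub_tr (R : realType) n m (A : 'M[R]_(n, m)) (v : 'rV[R]_n) :
  (forall x, (x <= kermx A)%MS -> pair v x = 0) -> (v <= A^T)%MS.
Proof.
move=> vA; rewrite submxE; apply/eqP/rowP => j; rewrite [RHS]mxE.
have kerA : (row j (cokermx A^T)^T <= kermx A)%MS.
  by rewrite sub_kermx -row_mul -[A in _ *m A]trmxK -trmx_mul mulmx_coker trmx0 row0.
rewrite -(vA _ kerA) pairE mxE; apply: eq_bigr => i _.
by rewrite !mxE.
Qed.

Lemma normal_cone_convex (R : realType) n (C : 'rV[R]_n -> Prop) xb :
  convex_set (normal_cone C xb).
Proof.
move=> c1 c2 t Nc1 Nc2 t0 t1 x Cx; rewrite !pairDl !pairZl.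
by have := Nc1 _ Cx; have := Nc2 _ Cx; nra.
Qed.

Section Faces.
Variables (R : realType) (n : nat) (K : 'rV[R]_n -> Prop) (xb : 'rV[R]_n).
Hypotheses (Kc : is_cone K) (Kv : convex_set K) (Kxb : K xb).
Implicit Types (F : 'rV[R]_n -> Prop) (s x y : 'rV[R]_n).

Definition compl_slack s := dual_cone K s /\ pair s xb = 0.

Lemma conj_face0 F : conj_face K F 0.
Proof. by split => x _; rewrite pair0l. Qed.

Lemma conj_faceD F s1 s2 :
  conj_face K F s1 -> conj_face K F s2 -> conj_face K F (s1 + s2).
Proof.
move=> [d1 o1] [d2 o2]; split => x Fx; rewrite pairDl.
  by rewrite addr_ge0 //; [exact: d1 | exact: d2].
by rewrite o1 // o2 // addr0.
Qed.

Lemma conj_faceZ F s (t : R) : conj_face K F s -> 0 <= t -> conj_face K F (t *: s).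
Proof.
move=> [ds os] t0; split => x Fx; rewrite pairZl; last by rewrite os // mulr0.
by rewrite mulr_ge0 //; exact: ds.
Qed.

Lemma conj_face_convex F : convex_set (conj_face K F).
Proof.
move=> s1 s2 t Cs1 Cs2 t0 t1.
by apply: conj_faceD; apply: conj_faceZ => //; lra.
Qed.

Lemma conj_faceP F s : (forall x, F x -> K x) -> relint F xb ->
  conj_face K F s <-> compl_slack s.
Proof.
move=> FK rF; have Fxb := rF.1; split => [[ds os]|[ds sxb]]; first by split; last exact: os.
split => // x Fx; have [e e0 /FK/ds] := relint_extend rF Fx.
rewrite pairDr pairZr pairBr sxb; have := ds _ (FK _ Fx); nra.
Qed.

(* the smallest face of [K] containing [xb]; only its face property and
   [minimal_face_relint] are used *)
Definition minimal_face x := K x /\ exists2 e : R, 0 < e & K (xb + e *: (xb - x)).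

Lemma minimal_face_convex : convex_set minimal_face.
Proof.
move=> x y t [Kx [ex ex0 Kex]] [Ky [ey ey0 Key]] t0 t1; split; first exact: Kv.
set e := ex * ey / (ex + ey); have e0 : 0 < e by rewrite divr_gt0 ?mulr_gt0 //; lra.
exists e => //.
have exe : e <= ex by rewrite ler_pdivrMr; nra.
have eye : e <= ey by rewrite ler_pdivrMr; nra.
have := Kv (t := t) (convex_shrink Kv Kxb Kex ex0 (ltW e0) exe)
             (convex_shrink Kv Kxb Key ey0 (ltW e0) eye) t0 t1.
by congr K; apply/rowP => i; rewrite !mxE; ring.
Qed.

Lemma minimal_face_face : face K minimal_face.
Proof.
split; [by move=> x [] | exact: minimal_face_convex |].
move=> x y t Kx Ky t0 t1 [_ [e e0 Kz]].
(* adding [e (1 - t) y] (resp. [e t x]) to [xb + e (xb - z)] gives a positive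
   multiple of a point beyond [xb] on the ray from [x] (resp. [y]) *)
split; split => //.
- have d0 : 0 < 1 + e * (1 - t) by nra.
  exists (e * t / (1 + e * (1 - t))); first by rewrite divr_gt0 // mulr_gt0.
  have := proj2 Kc _ ((1 + e * (1 - t))^-1)
    (convex_cone_addr Kc Kv Kz (proj2 Kc _ (e * (1 - t)) Ky _)).
  have -> : (1 + e * (1 - t))^-1 *: (xb + e *: (xb - (t *: x + (1 - t) *: y))
      + e * (1 - t) *: y) = xb + e * t / (1 + e * (1 - t)) *: (xb - x).
    by apply/rowP => i; rewrite !mxE; field; rewrite gt_eqF.
  by apply; [apply: mulr_ge0; lra | rewrite invr_ge0 ltW].
- have d0 : 0 < 1 + e * t by nra.
  exists (e * (1 - t) / (1 + e * t)); first by rewrite divr_gt0 // mulr_gt0; lra.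
  have := proj2 Kc _ ((1 + e * t)^-1)
    (convex_cone_addr Kc Kv Kz (proj2 Kc _ (e * t) Kx _)).
  have -> : (1 + e * t)^-1 *: (xb + e *: (xb - (t *: x + (1 - t) *: y)) + e * t *: x)
      = xb + e * (1 - t) / (1 + e * t) *: (xb - y).
    by apply/rowP => i; rewrite !mxE; field; rewrite gt_eqF.
  by apply; [apply: mulr_ge0; lra | rewrite invr_ge0 ltW].
Qed.

Lemma minimal_face_relint : relint minimal_face xb.
Proof.
have Fxb : minimal_face xb.
  by split => //; exists 1 => //; rewrite subrr scaler0 addr0.
apply: relint_of_extend minimal_face_convex Fxb _ => x [Kx [e e0 Kex]].
exists e => //; split => //; exists e^-1; first by rewrite invr_gt0.
have -> // : xb + e^-1 *: (xb - (xb + e *: (xb - x))) = x.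
by apply/rowP => i; rewrite !mxE; field; rewrite gt_eqF.
Qed.

End Faces.

Section ConicProgram.
Variables (R : realType) (n m : nat) (K : 'rV[R]_n -> Prop) (A : 'M[R]_(n, m)).
Variables (b : 'rV[R]_m) (xb : 'rV[R]_n).
Hypotheses (Kc : is_cone K) (Kv : convex_set K) (xbF : primal_feas K A b xb).
Implicit Types (c d s x : 'rV[R]_n) (y : 'rV[R]_m).

Local Notation CP := (primal_feas K A b).

Lemma normal_cone_of_slack y s : compl_slack K xb s -> normal_cone CP xb (y *m A^T - s).
Proof.
case: xbF => _ xbA [ds sxb] x [Kx xA].
by rewrite !pairBl !pair_mul_tr xA xbA sxb subr0 lerBlDr lerDl; exact: ds.
Qed.

Definition dir_cone d := exists2 x, K x & exists2 t : R, 0 <= t & d = t *: (x - xb).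

Lemma dir_coneD d1 d2 : dir_cone d1 -> dir_cone d2 -> dir_cone (d1 + d2).
Proof.
case: xbF => Kxb _ [x1 Kx1 [t1 t1_0 ->]] [x2 Kx2 [t2 t2_0 ->]].
have [t12|t12] := eqVneq (t1 + t2) 0.
  have [-> ->] : t1 = 0 /\ t2 = 0 by lra.
  by exists xb => //; exists 0; rewrite // !scale0r addr0.
have t_gt0 : 0 < t1 + t2 by rewrite lt_def t12 addr_ge0.
exists ((t1 / (t1 + t2)) *: x1 + (1 - t1 / (t1 + t2)) *: x2).
  by apply: Kv; rewrite ?divr_ge0 ?addr_ge0 // ler_pdivrMr // mul1r lerDl.
exists (t1 + t2); first exact: ltW.
by apply/rowP => i; rewrite !mxE; field; rewrite gt_eqF.
Qed.

Lemma dir_coneZ d (t : R) : dir_cone d -> 0 <= t -> dir_cone (t *: d).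
Proof.
move=> [x Kx [s s0 ->]] t0; exists x => //; exists (t * s); first exact: mulr_ge0.
by rewrite scalerA.
Qed.

Lemma dir_cone_kermx_cover : (exists x0, CP x0 /\ interior K x0) ->
  forall z, exists2 p, (p <= kermx A)%MS & dir_cone (z + p).
Proof.
case: xbF => _ xbA [x0 [[_ x0A] [e e0 ballK]]] z.
have [t [t0 _] tz] := exists_small_multiple z e0.
have Kx0z : K (x0 + t *: z) by apply: ballK; rewrite /in_ball addrC addKr.
exists (t^-1 *: (x0 - xb)).
  by rewrite sub_kermx -scalemxAl mulmxBl x0A xbA subrr scaler0.
exists (x0 + t *: z) => //; exists t^-1; first by rewrite invr_ge0 ltW.
by apply/rowP => i; rewrite !mxE; field; rewrite gt_eqF.
Qed.

Lemma slack_of_normal_cone c : (exists x0, CP x0 /\ interior K x0) ->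
  normal_cone CP xb c -> exists y, compl_slack K xb (y *m A^T - c).
Proof.
case: xbF => Kxb xbA slater Nc.
have c_dir_ker d : dir_cone d -> (d <= kermx A)%MS -> pair c d <= 0.
  move=> [x Kx [t t0 ->]]; rewrite sub_kermx -scalemxAl scaler_eq0.
  case/orP => [/eqP->|]; first by rewrite scale0r pair0r.
  rewrite mulmxBl subr_eq0 xbA => /eqP xA.
  by rewrite pairZr pairBr; have := Nc x (conj Kx xA); nra.
have [g [g_dir g_ker]] := cone_functional_extension dir_coneD dir_coneZ
  (dir_cone_kermx_cover slater) c_dir_ker.
have /submxP [y yE] : (c - g <= A^T)%MS.
  by apply: orth_kermx_sub_tr => x xA; rewrite pairBl g_ker // subrr.
have gxb : pair g xb = 0.
  have := g_dir (- xb); have := g_dir xb; rewrite pairNr.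
  have dxb : dir_cone xb.
    by exists (xb + xb); [exact: convex_cone_addr | exists 1; rewrite // scale1r addrK].
  have dnxb : dir_cone (- xb).
    by exists 0; [exact: Kc.1 | exists 1; rewrite // scale1r sub0r].
  by move=> /(_ dxb) + /(_ dnxb); lra.
exists y; rewrite -yE addrAC subrr add0r; split; last by rewrite pairNl gxb oppr0.
move=> x Kx; rewrite pairNl oppr_ge0.
have : pair g (x - xb) <= 0 by apply: g_dir; exists x => //; exists 1; rewrite ?scale1r.
by rewrite pairBr gxb subr0.
Qed.

Lemma normal_coneP c : (exists x0, CP x0 /\ interior K x0) ->
  normal_cone CP xb c <-> exists y, compl_slack K xb (y *m A^T - c).
Proof.
move=> slater; split; first exact: slack_of_normal_cone.
by move=> [y /(normal_cone_of_slack y)]; rewrite opprB addrC subrK.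
Qed.

Lemma relint_normal_cone_of_strict_compl c : (exists x0, CP x0 /\ interior K x0) ->
  (exists sb, dual_feas K A c sb /\ strictly_complementary K xb sb) ->
  relint (normal_cone CP xb) c.
Proof.
move=> slater [sb [[_ [yb sbE]] [F [[FK _ _] rF rsb]]]].
have slackF s : conj_face K F s <-> compl_slack K xb s := conj_faceP s FK rF.
have cE : c = yb *m A^T - sb by rewrite sbE opprB addrC subrK.
apply: relint_of_extend; first exact: normal_cone_convex.
  by rewrite cE; apply/normal_cone_of_slack/slackF; exact: rsb.1.
move=> c' /(normal_coneP _ slater) [y' /slackF Fs'].
have [e e0 /slackF Fe] := relint_extend rsb Fs'.
exists e => //; have := normal_cone_of_slack (yb + e *: (yb - y')) Fe.
rewrite mulmxDl -scalemxAl mulmxBl cE.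
by congr normal_cone; apply/rowP => i; rewrite !mxE; ring.
Qed.

Lemma strict_compl_of_relint_normal_cone c : (exists x0, CP x0 /\ interior K x0) ->
  relint (normal_cone CP xb) c ->
  exists sb, dual_feas K A c sb /\ strictly_complementary K xb sb.
Proof.
move=> slater rc; have Kxb := xbF.1.
have faceF := minimal_face_face Kc Kv Kxb; have [FK _ _] := faceF.
have rF := minimal_face_relint Kv Kxb; have slackF s := conj_faceP s FK rF.
have [s0 rs0] := exists_relint_cone (conj_face0 K (minimal_face K xb))
  (fun _ _ => @conj_faceD _ _ _ _ _ _) (fun _ _ => @conj_faceZ _ _ _ _ _ _).
have Ns0 : normal_cone CP xb (- s0).
  by have := normal_cone_of_slack 0 (proj1 (slackF _) rs0.1); rewrite mul0mx sub0r.
have [e e0 /(normal_coneP _ slater) [y Fs]] := relint_extend rc Ns0.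
set s := y *m A^T - _ in Fs; move/slackF: Fs => Fs.
set l := e / (1 + e).
have l0 : 0 < l by rewrite divr_gt0 //; lra.
have l1 : l <= 1 by rewrite ler_pdivrMr; lra.
have rsb := relint_convex_comb (@conj_face_convex _ _ K _) rs0 Fs l0 l1.
(* [c] is the convex combination of [-s0] and [c + e (c + s0)] with weights [l], [1 - l] *)
exists (l *: s0 + (1 - l) *: s); split; last by exists (minimal_face K xb).
split; first by case: rsb => -[].
exists ((1 + e)^-1 *: y); rewrite -scalemxAl /s /l.
by apply/rowP => i; rewrite !mxE; field; rewrite gt_eqF //; lra.
Qed.

End ConicProgram.

Unset Implicit Arguments. Set Strict Implicit.

Theorem proposition4p1 (R : realType) (n m : nat) (K : 'rV[R]_n -> Prop)
    (A : 'M[R]_(n, m)) (c : 'rV[R]_n) (b : 'rV[R]_m) :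
  is_cone K -> convex_set K -> closed_set K -> pointed K ->
  (exists x, interior K x) ->
  (exists x, primal_feas K A b x /\ interior K x) ->
  forall xb : 'rV[R]_n, primal_feas K A b xb ->
  ((exists sb : 'rV[R]_n, dual_feas K A c sb /\ strictly_complementary K xb sb)
   <-> relint (normal_cone (primal_feas K A b) xb) c).
Proof.
move=> Kc Kv _ _ _ slater xb xbF; split.
  exact: relint_normal_cone_of_strict_compl.
exact: strict_compl_of_relint_normal_cone.
Qed.
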